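(* Let $\gamma=(q_i)_{i=0,\dots,r}$ be a finite sequence of modes such that $D_{q_i}\cap D_{q_{i+1}}\neq\emptyset$ for all $i$, let $\Omega_\gamma=\bigcup_{i=0}^rD_{q_i}$, and let $\mathcal{T}_f\subset D_{q_0}$. Define targets recursively by $\tau_0=\mathcal{T}_f$ and $\tau_{i+1}=\mathcal{C}_{\mathcal{H}}(\tau_i,D_{q_i})\cap G_{(q_i,q_{i+1})}$ for $i=0,\dots,r-1$, where $G_{(q_i,q_{i+1})}=\partial D_{q_i}\cap\partial D_{q_{i+1}}$, and set $$\underline{\mathcal{C}}_{\mathcal{H}}(\Omega_\gamma)=\mathcal{C}_{\mathcal{H}}(\tau_0,D_{q_0})\cup\mathcal{C}_{\mathcal{H}}(\tau_1,D_{q_1})\cup\dots\cup\mathcal{C}_{\mathcal{H}}(\tau_r,D_{q_r}).$$ Then $\underline{\mathcal{C}}_{\mathcal{H}}(\Omega_\gamma)\subset\mathcal{C}_{\mathcal{H}}(\mathcal{T}_f,\Omega_\gamma)$.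
   Context: Let $\mathbb{U}_m\subset\mathbb{R}^m$ be a compact convex polytope and $f_h:\mathbb{R}^n\times\mathbb{U}_m\to\mathbb{R}^n$ the continuous piecewise affine vector field of the hybrid model (affine on each simplex of a simplicial mesh of $\mathbb{R}^n\times\mathbb{U}_m$ whose projections onto $\mathbb{R}^n$ form a simplicial mesh $(D_q)_{q\in\mathcal{Q}}$ of $\mathbb{R}^n$; the $D_q$ are the cells of modes $q$). For $\mathcal{T}\subset D\subset\mathbb{R}^n$, $\mathcal{C}_{\mathcal{H}}(\mathcal{T},D)$ is the set of $X_0\in D$ for which there exist a finite time $T>0$ and a measurable control $u:[0,T]\to\mathbb{U}_m$ such that the solution $X_h$ of $\dot X=f_h(X,u)$, $X(0)=X_0$ satisfies $X_h(T)\in\mathcal{T}$ and $X_h(t)\in D$ for all $t\in[0,T]$. *)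

From HB Require Import structures.
From mathcomp Require Import all_boot all_order all_algebra.
From mathcomp Require Import all_classical all_reals all_analysis.
Set Implicit Arguments. Unset Strict Implicit. Unset Printing Implicit Defensive.
Import Order.TTheory GRing.Theory Num.Theory.
Import numFieldNormedType.Exports.
Local Open Scope classical_set_scope.
Local Open Scope ring_scope.

Section Hybrid.
Variable R : realType.

Definition conv_hull (k : nat) (S : seq 'rV[R]_k) : set 'rV[R]_k :=
  [set x | exists w : 'I_(size S) -> R,
     (forall i, 0 <= w i) /\ \sum_(i < size S) w i = 1 /\
     x = \sum_(i < size S) w i *: S`_i].

Definition aff_indep (k : nat) (S : seq 'rV[R]_k) : Prop :=
  forall w : 'I_(size S) -> R,
    \sum_(i < size S) w i = 0 -> \sum_(i < size S) w i *: S`_i = 0 ->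
    forall i, w i = 0.

Definition simplex_vertices (k : nat) (A : set 'rV[R]_k) (S : seq 'rV[R]_k) : Prop :=
  size S = k.+1 /\ aff_indep S /\ A = conv_hull S.

(* Faces of the simplex with vertex list S (the empty face included). *)
Definition is_face (k : nat) (S : seq 'rV[R]_k) (B : set 'rV[R]_k) : Prop :=
  exists msk : bitseq, B = conv_hull (mask msk S).

Definition simplicial_mesh (k : nat) (J : Type) (P : J -> set 'rV[R]_k)
    (E : set 'rV[R]_k) : Prop :=
  (exists V : J -> seq 'rV[R]_k,
     (forall j, simplex_vertices (P j) (V j)) /\
     (forall j j', j <> j' ->
        is_face (V j) (P j `&` P j') /\ is_face (V j') (P j `&` P j'))) /\
  \bigcup_(j in setT) P j = E /\
  (forall x : 'rV[R]_k, finite_set [set j | P j `&` ball x 1 !=set0]).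

Definition hybrid_model (n m : nat) (U : set 'rV[R]_m)
    (f : 'rV[R]_n -> 'rV[R]_m -> 'rV[R]_n) (Q : Type) (D : Q -> set 'rV[R]_n)
    : Prop :=
  (exists S : seq 'rV[R]_m, U = conv_hull S) /\ compact U /\
  {within [set z : 'rV[R]_(n + m) | U (rsubmx z)],
     continuous (fun z : 'rV[R]_(n + m) => f (lsubmx z) (rsubmx z))} /\
  simplicial_mesh D setT /\
  (exists (J : Type) (P : J -> set 'rV[R]_(n + m)),
     simplicial_mesh P [set z | U (rsubmx z)] /\
     (forall j, exists q, (fun z : 'rV[R]_(n + m) => lsubmx z) @` P j = D q) /\
     (forall j, exists (A : 'M[R]_(n + m, n)) (b : 'rV[R]_n),
        forall z, P j z -> f (lsubmx z) (rsubmx z) = z *m A + b)).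

(* Caratheodory solution on [0,T] of dX/dt = f(X,u), X(0) = X0. *)
Definition is_solution (n m : nat) (f : 'rV[R]_n -> 'rV[R]_m -> 'rV[R]_n)
    (u : R -> 'rV[R]_m) (X0 : 'rV[R]_n) (T : R) (X : R -> 'rV[R]_n) : Prop :=
  forall i : 'I_n,
    (lebesgue_measure).-integrable [set` `[0, T]]
       (fun s => (f (X s) (u s) 0 i)%:E) /\
    forall t, [set` `[0, T]] t ->
      (X t 0 i)%:E = adde (X0 0 i)%:E
        (\int[lebesgue_measure]_(s in [set` `[0, t]]) (f (X s) (u s) 0 i)%:E).

Definition ctrl_set (n m : nat) (U : set 'rV[R]_m)
    (f : 'rV[R]_n -> 'rV[R]_m -> 'rV[R]_n) (Tg Dom : set 'rV[R]_n)
    : set 'rV[R]_n :=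
  [set X0 | Dom X0 /\ exists T : R, 0 < T /\
     exists u : R -> 'rV[R]_m,
       (forall j : 'I_m, measurable_fun [set` `[0, T]] (fun t => u t 0 j)) /\
       (forall t, [set` `[0, T]] t -> U (u t)) /\
       exists X : R -> 'rV[R]_n,
         is_solution f u X0 T X /\ Tg (X T) /\
         (forall t, [set` `[0, T]] t -> Dom (X t))].

Definition bdry (n : nat) (A : set 'rV[R]_n) : set 'rV[R]_n :=
  closure A `\` interior A.

Definition guard (n : nat) (Q : Type) (D : Q -> set 'rV[R]_n) (q q' : Q) :=
  bdry (D q) `&` bdry (D q').

Fixpoint tau (n m : nat) (U : set 'rV[R]_m)
    (f : 'rV[R]_n -> 'rV[R]_m -> 'rV[R]_n) (Q : Type) (D : Q -> set 'rV[R]_n)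
    (gam : nat -> Q) (Tf : set 'rV[R]_n) (i : nat) : set 'rV[R]_n :=
  match i with
  | 0 => Tf
  | i'.+1 => ctrl_set U f (tau U f D gam Tf i') (D (gam i'))
               `&` guard D (gam i') (gam i)
  end.

End Hybrid.

From HB Require Import structures.
From mathcomp Require Import all_boot all_order all_algebra.
From mathcomp Require Import all_classical all_reals all_analysis.
From mathcomp Require Import measurable_realfun lra.
Import Order.TTheory GRing.Theory Num.Theory.
Import numFieldNormedType.Exports.
Local Open Scope classical_set_scope.
Local Open Scope ring_scope.

(* A point of C_H(tau_(i+1), D_(q_(i+1))) is steered into tau_(i+1), whose
   points are in turn steered into tau_i inside D_(q_i).  Gluing the two
   controls and trajectories end to end, the second one delayed by the
   horizon of the first, gives C_H(C_H(T, E), D) <= C_H(T, E) whenever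
   D <= E, and induction on i gives C_H(tau_i, D_(q_i)) <= C_H(T_f, Omega).
   The delayed piece is again a Caratheodory solution because Lebesgue
   measure is translation invariant. *)

Section lebesgue_shift.
Context {R : realType}.
Local Notation mu := (@lebesgue_measure R).

Lemma measurable_fun_addr (c : R) :
  measurable_fun [set: measurableTypeR R]
    ((fun x => x + c) : measurableTypeR R -> measurableTypeR R).
Proof. exact: measurable_funD. Qed.

(* The measure instance of [pushforward] takes the measurability proof as an
   argument, so it cannot be inferred and has to be named. *)
Let shifted_lebesgue (c : R) :=
  measure_function_pushforward__canonical__measure_function_Measure mu
    (measurable_fun_addr c).

Lemma lebesgue_measure_shift (c : R) (A : set R) :
  measurable A -> mu ((fun x => x + c) @^-1` A) = mu A.
Proof.
move=> mA; apply/esym.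
apply: (@lebesgue_measure_unique R (shifted_lebesgue c)) => //.
move=> _ [[a b] _ <-] /=; rewrite /pushforward.
have -> : (fun x => x + c) @^-1` `]a, b]%classic = `](a - c), (b - c)]%classic.
  by apply/seteqP; split => x /=; rewrite !in_itv /= => /andP[? ?];
    apply/andP; split; lra.
rewrite !lebesgue_measure_itv /= !lte_fin ltrD2r.
by case: ifP => // _; rewrite -!EFinD opprB addrA subrK.
Qed.

Lemma preimage_addr_itv_cc (a b c : R) :
  (fun x => x - c) @^-1` `[a, b]%classic = `[a + c, b + c]%classic.
Proof.
by apply/seteqP; split => x /=; rewrite !in_itv /= => /andP[? ?];
  apply/andP; split; lra.
Qed.

Lemma integral_shift (c : R) (D : set R) (h : R -> \bar R) :
  measurable D -> measurable_fun D h ->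
  (\int[mu]_(x in D) h x =
   \int[mu]_(x in (fun x => x + c)%R @^-1` D) h (x + c)%R)%E.
Proof.
move=> mD mh.
rewrite (eq_measure_integral (shifted_lebesgue c)); last first.
  by move=> A mA _; rewrite /= /pushforward lebesgue_measure_shift.
rewrite integralE [RHS]integralE.
rewrite (ge0_integral_pushforward (measurable_fun_addr c)) //;
  last exact: measurable_funepos.
rewrite (ge0_integral_pushforward (measurable_fun_addr c)) //;
  last exact: measurable_funeneg.
by rewrite -funepos_comp -funeneg_comp.
Qed.

Lemma integral_itv_shift (a b c : R) (h : R -> \bar R) :
  measurable_fun `[a, b] h ->
  (\int[mu]_(x in `[a, b]) h x =
   \int[mu]_(x in `[(a + c)%R, (b + c)%R]) h (x - c)%R)%E.
Proof.
by move=> mh; rewrite (integral_shift (- c)) // preimage_addr_itv_cc.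
Qed.

Lemma integrable_itv_shift (a b c : R) (h : R -> \bar R) :
  mu.-integrable `[a, b] h ->
  mu.-integrable `[a + c, b + c] (fun x => h (x - c)).
Proof.
move=> /integrableP[mh hfin]; apply/integrableP; split.
  apply: (measurable_comp (measurable_itv _) _ mh).
    by move=> _ [x + <-]; rewrite -preimage_addr_itv_cc.
  exact: measurable_funS (measurable_fun_addr (- c)).
by move: hfin; rewrite (integral_itv_shift _ _ c) //; exact: measurableT_comp.
Qed.

End lebesgue_shift.

Section integrable_setU.
Context d (T : measurableType d) (R : realType) (mu : {measure set T -> \bar R}).

Lemma integrable_setU (A B : set T) (g : T -> \bar R) :
  measurable A -> measurable B ->
  mu.-integrable A g -> mu.-integrable B g -> mu.-integrable (A `|` B) g.
Proof.
move=> mA mB iA iB.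
have -> : A `|` B = A `|` (B `\` A) by rewrite setUDr setDv setD0.
have mBA : measurable (B `\` A) by exact: measurableD.
have /integrableP[mgA fA] := iA.
have /integrableP[mgBA fBA] := integrableS mB mBA (@subDsetl _ _ _) iB.
apply/integrableP; split; first exact/measurable_funU.
rewrite ge0_integral_setU //; first exact: lte_add_pinfty.
- by apply/measurable_funU => //; split; exact: measurableT_comp.
- by apply/disj_setPS; rewrite setDIK.
Qed.

End integrable_setU.

Section glue.
Context {R : realType}.
Local Notation mu := (@lebesgue_measure R).

Definition glue {T : Type} (T1 : R) (g1 g2 : R -> T) (t : R) : T :=
  if t <= T1 then g1 t else g2 (t - T1).
Arguments glue {T} T1 g1 g2 t : simpl never.

Lemma glue_le {T : Type} (T1 t : R) (g1 g2 : R -> T) :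
  t <= T1 -> glue T1 g1 g2 t = g1 t.
Proof. by rewrite /glue => ->. Qed.

Lemma glue_gt {T : Type} (T1 t : R) (g1 g2 : R -> T) :
  T1 < t -> glue T1 g1 g2 t = g2 (t - T1).
Proof. by rewrite /glue leNgt => ->. Qed.

Lemma glue_setU {T : Type} {T1 T2 : R} {P1 P2 : set T} {g1 g2 : R -> T} :
  (forall t, `[0, T1]%classic t -> P1 (g1 t)) ->
  (forall t, `[0, T2]%classic t -> P2 (g2 t)) ->
  forall t, `[0, T1 + T2]%classic t -> (P1 `|` P2) (glue T1 g1 g2 t).
Proof.
move=> P1g1 P2g2 t; rewrite /= in_itv /= => /andP[t_ge0 tT].
have [tT1|T1t] := leP t T1.
  by left; rewrite glue_le //; apply: P1g1; rewrite /= in_itv /= t_ge0 tT1.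
right; rewrite glue_gt //; apply: P2g2.
by rewrite /= in_itv /= subr_ge0 ltW //= lerBlDl.
Qed.

Lemma itv_cc_split (a b c : R) : a <= b -> b <= c ->
  `[a, c]%classic = `[a, b]%classic `|` `]b, c]%classic.
Proof. by move=> ab bc; rewrite (@itv_bndbnd_setU _ _ _ (BRight b)) ?bnd_simp. Qed.

Lemma disjoint_itv_cc_oc (a b c : R) :
  [disjoint `[a, b]%classic & `]b, c]%classic].
Proof.
apply: lt_disjoint => x y; rewrite !in_itv /= => /andP[_ xb] /andP[bx _].
exact: le_lt_trans xb bx.
Qed.

Lemma image_subr_itv_oc (T1 T2 : R) :
  (fun t => t - T1) @` `]T1, T1 + T2]%classic `<=` `[0, T2]%classic.
Proof.
move=> _ [t + <-]; rewrite /= !in_itv /= => /andP[? ?].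
by apply/andP; split; lra.
Qed.

Lemma measurable_fun_glue {d} {T : measurableType d} {T1 T2 : R}
    {g1 g2 : R -> T} : 0 <= T1 -> 0 <= T2 ->
  measurable_fun `[0, T1] g1 -> measurable_fun `[0, T2] g2 ->
  measurable_fun `[0, T1 + T2] (glue T1 g1 g2).
Proof.
move=> T1ge0 T2ge0 mg1 mg2.
rewrite (@itv_cc_split 0 T1) ?lerDl //; apply/measurable_funU => //; split.
  apply: eq_measurable_fun mg1 => t; rewrite inE /= in_itv /= => /andP[_ tT1].
  by rewrite glue_le.
apply: (@eq_measurable_fun _ _ _ _ _ (g2 \o (fun t => t - T1))).
  by move=> t; rewrite inE /= in_itv /= => /andP[T1t _]; rewrite glue_gt.
apply: measurable_comp (measurable_itv _) (image_subr_itv_oc _ _) mg2 _.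
exact: measurable_funS (measurable_fun_addr (- T1)).
Qed.

Lemma integrable_glue (T1 T2 : R) (h1 h2 : R -> \bar R) :
  0 <= T1 -> 0 <= T2 ->
  mu.-integrable `[0, T1] h1 -> mu.-integrable `[0, T2] h2 ->
  mu.-integrable `[0, T1 + T2] (glue T1 h1 h2).
Proof.
move=> T1ge0 T2ge0 ih1 ih2.
rewrite (@itv_cc_split 0 T1) ?lerDl //; apply: integrable_setU => //.
  by apply: eq_integrable ih1 => // t; rewrite inE /= in_itv /= => /andP[_ ?];
    rewrite glue_le.
have : mu.-integrable `]T1, T1 + T2] (fun t => h2 (t - T1)).
  move: (integrable_itv_shift _ _ T1 _ ih2); apply: integrableS => //.
  by rewrite add0r addrC => t /=; rewrite !in_itv /= => /andP[? ->];
    rewrite andbT ltW.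
by apply: eq_integrable => // t; rewrite inE /= in_itv /= => /andP[? _];
  rewrite glue_gt.
Qed.

Lemma integral_glue (T1 t : R) (h1 h2 : R -> \bar R) : 0 <= T1 <= t ->
  measurable_fun `[0, T1] h1 -> measurable_fun `[0, t - T1] h2 ->
  (\int[mu]_(s in `[0%R, t]) glue T1 h1 h2 s =
   \int[mu]_(s in `[0%R, T1]) h1 s + \int[mu]_(s in `[0%R, (t - T1)%R]) h2 s)%E.
Proof.
move=> /andP[T1ge0 T1t] mh1 mh2.
have tT1ge0 : 0 <= t - T1 by rewrite subr_ge0.
have mglue := measurable_fun_glue T1ge0 tT1ge0 mh1 mh2.
rewrite addrC subrK in mglue.
rewrite (@itv_cc_split 0 T1 t) // in mglue *.
rewrite integral_setU //; last exact: disjoint_itv_cc_oc.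
congr (_ + _)%E.
  by apply: eq_integral => s; rewrite inE /= in_itv /= => /andP[_ ?];
    rewrite glue_le.
have /(measurable_funU _ _ _) [//|//|_ mglue2] := mglue.
have mh2s : measurable_fun `]T1, t] (fun s => h2 (s - T1)).
  by apply: eq_measurable_fun mglue2 => s; rewrite inE /= in_itv /= =>
    /andP[? _]; rewrite glue_gt.
transitivity (\int[mu]_(s in `]T1, t]) h2 (s - T1)%R)%E.
  by apply: eq_integral => s; rewrite inE /= in_itv /= => /andP[? _];
    rewrite glue_gt.
by rewrite integral_itv_obnd_cbnd // [RHS](integral_itv_shift _ _ T1) // add0r subrK.
Qed.

End glue.

Section concatenation.
Context {R : realType} {n m : nat} (U : set 'rV[R]_m)
  (f : 'rV[R]_n -> 'rV[R]_m -> 'rV[R]_n).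

Lemma is_solution_glue (u1 u2 : R -> 'rV[R]_m) (X1 X2 : R -> 'rV[R]_n)
    (X0 : 'rV[R]_n) (T1 T2 : R) : 0 <= T1 -> 0 <= T2 ->
  is_solution f u1 X0 T1 X1 -> is_solution f u2 (X1 T1) T2 X2 ->
  is_solution f (glue T1 u1 u2) X0 (T1 + T2) (glue T1 X1 X2).
Proof.
move=> T1ge0 T2ge0 sol1 sol2 i.
have [int1 eq1] := sol1 i; have [int2 eq2] := sol2 i.
have -> : (fun s => (f (glue T1 X1 X2 s) (glue T1 u1 u2 s) 0 i)%:E) =
    glue T1 (fun s => (f (X1 s) (u1 s) 0 i)%:E)
            (fun s => (f (X2 s) (u2 s) 0 i)%:E).
  by apply/funext => s; rewrite /glue; case: ifP.
split; first exact: integrable_glue.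
move=> t; rewrite /= in_itv /= => /andP[t_ge0 tT].
have [tT1|T1t] := leP t T1.
  rewrite glue_le // eq1 /=; last by rewrite in_itv /= t_ge0 tT1.
  congr (_ + _)%E; apply: eq_integral => s.
  by rewrite inE /= in_itv /= => /andP[_ stT]; rewrite (le_trans stT tT1).
rewrite glue_gt // eq2 /=; last first.
  by rewrite in_itv /= subr_ge0 ltW //= lerBlDl.
rewrite eq1 /=; last by rewrite in_itv /= T1ge0 lexx.
have /integrableP[mh1 _] := int1; have /integrableP[mh2 _] := int2.
rewrite integral_glue ?T1ge0 ?ltW //; first exact/esym/addeA.
apply: measurable_funS mh2 => // s /=; rewrite !in_itv /= => /andP[-> sT].
by rewrite (le_trans sT) // lerBlDl.
Qed.

Lemma ctrl_set_domS (Tg Dom E : set 'rV[R]_n) :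
  Dom `<=` E -> ctrl_set U f Tg Dom `<=` ctrl_set U f Tg E.
Proof.
move=> DomE X0 [Dom0 [T [T_gt0 [u [meas_u [Uu [X [sol [TgX DomX]]]]]]]]].
split; first exact: DomE.
exists T; split => //; exists u; split => //; split => //.
by exists X; split => //; split => // t /DomX /DomE.
Qed.

Lemma ctrl_set_trans (A Tg Dom E : set 'rV[R]_n) :
  Dom `<=` E -> A `<=` ctrl_set U f Tg E ->
  ctrl_set U f A Dom `<=` ctrl_set U f Tg E.
Proof.
move=> DomE AC X0 [Dom0 [T1 [T1_gt0 [u1 [meas_u1 [Uu1 [X1 [sol1 [AX1 DomX1]]]]]]]]].
have [_ [T2 [T2_gt0 [u2 [meas_u2 [Uu2 [X2 [sol2 [TgX2 EX2]]]]]]]]] := AC _ AX1.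
have [T1ge0 T2ge0] := (ltW T1_gt0, ltW T2_gt0).
split; first exact: DomE.
exists (T1 + T2); split; first exact: addr_gt0.
exists (glue T1 u1 u2); split.
  move=> j; apply: eq_measurable_fun (measurable_fun_glue T1ge0 T2ge0
    (meas_u1 j) (meas_u2 j)) => t _.
  by rewrite /glue; case: ifP.
split; first by move=> t /(glue_setU Uu1 Uu2) [].
exists (glue T1 X1 X2); split; first exact: is_solution_glue.
split; first by rewrite glue_gt ?ltrDl // addrC addKr.
by move=> t /(glue_setU DomX1 EX2) [/DomE|].
Qed.

End concatenation.

Theorem proposition10 (R : realType) (n m : nat) (U : set 'rV[R]_m)
    (f : 'rV[R]_n -> 'rV[R]_m -> 'rV[R]_n) (Q : Type) (D : Q -> set 'rV[R]_n)
    (r : nat) (gam : nat -> Q) (Tf : set 'rV[R]_n) :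
  hybrid_model U f D ->
  (forall i, (i < r)%N -> D (gam i) `&` D (gam i.+1) !=set0) ->
  Tf `<=` D (gam 0%N) ->
  \bigcup_(i in [set i : nat | (i <= r)%N])
      ctrl_set U f (tau U f D gam Tf i) (D (gam i))
    `<=` ctrl_set U f Tf (\bigcup_(i in [set i : nat | (i <= r)%N]) D (gam i)).
Proof.
move=> _ _ _.
set Omega := \bigcup_(i in _) D (gam i).
have D_Omega i : (i <= r)%N -> D (gam i) `<=` Omega by move=> ir x Dx; exists i.
suff tau_Omega i : (i <= r)%N ->
    ctrl_set U f (tau U f D gam Tf i) (D (gam i)) `<=` ctrl_set U f Tf Omega.
  by move=> X0 [i /= ir]; exact: tau_Omega.
elim: i => [|i IH] ir; first exact/ctrl_set_domS/D_Omega.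
apply: ctrl_set_trans; first exact: D_Omega.
by move=> x [+ _]; apply: IH; exact: ltnW.
Qed.
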